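(* Let $b_x,b_y,u_x,u_y,K,\beta,e$ be positive constants with $u_y>u_x$ and $b_x\geq b_y+e$, let $h>0$, and set \[ \phi_1(h)=\frac{b_y\left\{1-\exp\left(-\frac{\beta K u_y}{b_y}h\right)\right\}}{\beta K u_y},\qquad \phi_2(h)=h . \] Consider the discrete system \[ X_{n+1}=\frac{X_n(1+\phi_1(h)b_x)+\phi_1(h)eY_n}{1+\phi_1(h)\left(\frac{b_x}{K}X_n+\frac{b_x}{K}Y_n+u_x+\beta Y_n+\frac{e}{K}Y_n+\frac{e}{K}\frac{Y_n^2}{X_n}\right)},\qquad Y_{n+1}=\frac{Y_n\{1+\phi_2(h)(b_y+\beta X_n)\}}{1+\phi_2(h)\left(\frac{b_y}{K}X_n+\frac{b_y}{K}Y_n+u_y\right)} . \] Let $E_0=(0,0)$, $E_1=(\bar X,0)$ with $\bar X=K(1-u_x/b_x)$, and $E^*=(X^*,Y^* )$ with \[ X^*=\frac{-B+\sqrt{B^2-4AC}}{2A},\qquad Y^*=\frac{(\beta K-b_y)X^*}{b_y}+\frac{K(b_y-u_y)}{b_y}, \] where \[ A=\frac{\beta K}{b_y^2}\{b_y(b_x-b_y-e)+\beta K(b_y+e)\}, \] \[ B=-K(b_x-u_x)+K(b_x+\beta K+e)\frac{b_y-u_y}{b_y}+2eK\frac{(\beta K-b_y)(b_y-u_y)}{b_y^2}-\frac{eK(\beta K-b_y)}{b_y}, \] \[ C=-\frac{eK^2(b_y-u_y)u_y}{b_y^2}. \] Define $V_0=\frac{b_y}{b_x}\frac{u_x}{u_y}$,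 $H_0=\frac{\beta}{u_y}K\left(1-\frac{u_x}{b_x}\right)$ and $R_0=V_0+H_0$. Then, for every $h>0$: (i) the system is locally asymptotically stable around $E_0$ if $b_x<u_x$ and $b_y<u_y$; (ii) if $b_x>u_x$, the system is locally asymptotically stable around $E_1$ when $R_0<1$, and $E_1$ is unstable when $R_0>1$; (iii) the system is locally asymptotically stable around $E^*$ if $b_x>u_x$, $b_y>u_y$, $b_y>\beta K$ and $\frac{K}{X^*}>\frac{b_y-\beta K}{b_y-u_y}$.
   Context: This is a nonstandard finite-difference discretization (with step size $h$) of a host–parasite model with horizontal and imperfect vertical transmission. The paper assumes throughout that $u_y>u_x$ and $b_x\geq b_y+e$. A fixed point of the map is called (locally asymptotically) stable if both eigenvalues of the Jacobian of the map at the fixed point have modulus strictly less than $1$. *)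

From Stdlib Require Import Reals.
From Coquelicot Require Import Coquelicot.
Open Scope R_scope.

Definition phi1 (bY uY K beta h : R) : R :=
  bY * (1 - exp (- (beta * K * uY / bY) * h)) / (beta * K * uY).
Definition phi2 (h : R) : R := h.

(* The discrete map (X_n, Y_n) |-> (F1 X_n Y_n, F2 X_n Y_n).
   Division is Rocq's total division (x / 0 = 0). *)
Definition F1 (bX bY uX uY K beta e h : R) (X Y : R) : R :=
  let p := phi1 bY uY K beta h in
  (X * (1 + p * bX) + p * e * Y) /
  (1 + p * (bX / K * X + bX / K * Y + uX + beta * Y + e / K * Y
            + e / K * (Y ^ 2 / X))).

Definition F2 (bX bY uX uY K beta e h : R) (X Y : R) : R :=
  let q := phi2 h in
  Y * (1 + q * (bY + beta * X)) /
  (1 + q * (bY / K * X + bY / K * Y + uY)).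

Definition J11 bX bY uX uY K beta e h X0 Y0 :=
  Derive (fun x => F1 bX bY uX uY K beta e h x Y0) X0.
Definition J12 bX bY uX uY K beta e h X0 Y0 :=
  Derive (fun y => F1 bX bY uX uY K beta e h X0 y) Y0.
Definition J21 bX bY uX uY K beta e h X0 Y0 :=
  Derive (fun x => F2 bX bY uX uY K beta e h x Y0) X0.
Definition J22 bX bY uX uY K beta e h X0 Y0 :=
  Derive (fun y => F2 bX bY uX uY K beta e h X0 y) Y0.

Definition is_eigenvalue2 (a b c d : R) (z : C) : Prop :=
  ((RtoC a - z) * (RtoC d - z) - RtoC b * RtoC c)%C = RtoC 0.

Definition jac_eigenvalue bX bY uX uY K beta e h X0 Y0 (z : C) : Prop :=
  is_eigenvalue2 (J11 bX bY uX uY K beta e h X0 Y0) (J12 bX bY uX uY K beta e h X0 Y0)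
                 (J21 bX bY uX uY K beta e h X0 Y0) (J22 bX bY uX uY K beta e h X0 Y0) z.

Definition LAS bX bY uX uY K beta e h X0 Y0 : Prop :=
  forall z : C, jac_eigenvalue bX bY uX uY K beta e h X0 Y0 z -> Cmod z < 1.

Definition unstable bX bY uX uY K beta e h X0 Y0 : Prop :=
  exists z : C, jac_eigenvalue bX bY uX uY K beta e h X0 Y0 z /\ Cmod z > 1.

Definition Xbar (bX uX K : R) : R := K * (1 - uX / bX).

Definition coefA (bX bY e K beta : R) : R :=
  beta * K / bY ^ 2 * (bY * (bX - bY - e) + beta * K * (bY + e)).
Definition coefB (bX bY uX uY e K beta : R) : R :=
  - K * (bX - uX) + K * (bX + beta * K + e) * ((bY - uY) / bY)
  + 2 * e * K * ((beta * K - bY) * (bY - uY) / bY ^ 2)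
  - e * K * (beta * K - bY) / bY.
Definition coefC (bY uY e K : R) : R :=
  - (e * K ^ 2 * (bY - uY) * uY / bY ^ 2).

Definition Xstar (bX bY uX uY e K beta : R) : R :=
  let A := coefA bX bY e K beta in
  let B := coefB bX bY uX uY e K beta in
  let C0 := coefC bY uY e K in
  (- B + sqrt (B ^ 2 - 4 * A * C0)) / (2 * A).
Definition Ystar (bX bY uX uY e K beta : R) : R :=
  (beta * K - bY) * Xstar bX bY uX uY e K beta / bY + K * (bY - uY) / bY.

Definition V0 (bX bY uX uY : R) : R := bY / bX * (uX / uY).
Definition H0 (bX uX uY K beta : R) : R := beta / uY * K * (1 - uX / bX).
Definition Rnum0 (bX bY uX uY K beta : R) : R := V0 bX bY uX uY + H0 bX uX uY K beta.

From Stdlib Require Import Reals Lra Psatz.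
From Coquelicot Require Import Coquelicot.
Open Scope R_scope.

(* Each equilibrium is a fixed point of a map whose components are quotients
   N/D, and at a fixed point where N = c D the quotient rule collapses to
   (N' - c D')/D.  On the axis Y = 0 the Jacobian is upper triangular, and
   its diagonal entries are ratios lying in (-1, 1) or beyond 1 according to
   bX vs uX, bY vs uY and R0 vs 1.  At a positive equilibrium the Jacobian
   is I - diag(s, t) M with 0 < s G1, t G2 < 1 for every h > 0, and the Jury
   conditions reduce to three polynomial inequalities on M, which hold as
   soon as bY > beta K and bX >= bY + e.  The hypothesis
   K / X* > (bY - beta K) / (bY - uY) only serves to make Y* positive. *)

Lemma is_eigenvalue2_parts a b c d x y :
  is_eigenvalue2 a b c d (x, y) ->
  (a - x) * (d - x) - y * y - b * c = 0 /\ y * (2 * x - a - d) = 0.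
Proof.
  unfold is_eigenvalue2; intros H.
  pose proof (f_equal fst H) as Hre; pose proof (f_equal snd H) as Him.
  simpl in Hre, Him; split; lra.
Qed.

Lemma Cmod_lt_1_of_jury a b c d z :
  0 < 1 - (a + d) + (a * d - b * c) -> 0 < 1 + (a + d) + (a * d - b * c) ->
  a * d - b * c < 1 -> is_eigenvalue2 a b c d z -> Cmod z < 1.
Proof.
  intros Hm Hp Hdet Hz; destruct z as [x y].
  destruct (is_eigenvalue2_parts _ _ _ _ _ _ Hz) as [Hre Him].
  assert (Hxy : x * x + y * y < 1).
  { destruct (Req_dec y 0) as [-> | Hy].
    - assert (x < 1).
      { destruct (Rlt_or_le x 1) as [| Hx]; [assumption |].
        assert (0 <= (x - 1) * (x + 1 - (a + d))) by (apply Rmult_le_pos; lra).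
        nra. }
      assert (-1 < x).
      { destruct (Rlt_or_le (-1) x) as [| Hx]; [assumption |].
        assert (0 <= (-1 - x) * (1 - x + (a + d))) by (apply Rmult_le_pos; lra).
        nra. }
      nra.
    - assert (Hx : 2 * x - a - d = 0) by (apply (Rmult_eq_reg_l y); lra).
      nra. }
  unfold Cmod; rewrite <- sqrt_1.
  apply sqrt_lt_1_alt; simpl; split; nra.
Qed.

Lemma Cmod_lt_1_triangular a b d z :
  -1 < a < 1 -> -1 < d < 1 -> is_eigenvalue2 a b 0 d z -> Cmod z < 1.
Proof.
  intros Ha Hd; apply Cmod_lt_1_of_jury; rewrite Rmult_0_r, Rminus_0_r; nra.
Qed.

Lemma is_eigenvalue2_triangular_r a b d : is_eigenvalue2 a b 0 d (RtoC d).
Proof.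
  unfold is_eigenvalue2, RtoC; apply injective_projections; simpl; ring.
Qed.

(* For J = I - diag(s, t) M one has 1 - tr J + det J = s t det M and
   1 + tr J + det J = det (2I - diag(s, t) M); the latter is bilinear in
   (s G1, t G2) and positive at the four corners of the unit square. *)
Lemma Cmod_lt_1_I_sub_diag_mul m11 m12 m21 m22 G1 G2 s t z :
  0 < m11 < G1 -> 0 < m22 < G2 ->
  0 < m11 * m22 - m12 * m21 -> m11 * m22 - m12 * m21 < m11 * G2 + m22 * G1 ->
  0 < (2 * G1 - m11) * (2 * G2 - m22) - m12 * m21 ->
  0 < s * G1 < 1 -> 0 < t * G2 < 1 ->
  is_eigenvalue2 (1 - s * m11) (- (s * m12)) (- (t * m21)) (1 - t * m22) z ->
  Cmod z < 1.
Proof.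
  intros H11 H22 Hdet Hdet' Hcorner Hs Ht.
  assert (Hs0 : 0 < s) by (destruct (Rle_or_lt s 0); nra).
  assert (Ht0 : 0 < t) by (destruct (Rle_or_lt t 0); nra).
  assert (Hst : 0 < s * t) by nra.
  apply Cmod_lt_1_of_jury.
  - replace (1 - (1 - s * m11 + (1 - t * m22))
             + ((1 - s * m11) * (1 - t * m22) - - (s * m12) * - (t * m21)))
      with (s * t * (m11 * m22 - m12 * m21)) by ring.
    nra.
  - set (u := s * G1) in *; set (v := t * G2) in *.
    assert (Hbilin :
      1 + (1 - s * m11 + (1 - t * m22))
        + ((1 - s * m11) * (1 - t * m22) - - (s * m12) * - (t * m21))
      = (1 - u) * (1 - v) * 4 + u * (1 - v) * (2 * (2 * G1 - m11) / G1)
        + (1 - u) * v * (2 * (2 * G2 - m22) / G2)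
        + u * v * (((2 * G1 - m11) * (2 * G2 - m22) - m12 * m21) / (G1 * G2))).
    { unfold u, v; field; lra. }
    rewrite Hbilin.
    assert (0 < 2 * (2 * G1 - m11) / G1) by (apply Rdiv_lt_0_compat; lra).
    assert (0 < 2 * (2 * G2 - m22) / G2) by (apply Rdiv_lt_0_compat; lra).
    assert (0 < ((2 * G1 - m11) * (2 * G2 - m22) - m12 * m21) / (G1 * G2))
      by (apply Rdiv_lt_0_compat; nra).
    assert (0 < (1 - u) * (1 - v)) by nra.
    assert (0 < u * (1 - v)) by nra.
    assert (0 < (1 - u) * v) by nra.
    assert (0 < u * v) by nra.
    nra.
  - assert (s * t * (m11 * m22 - m12 * m21) < s * t * (m11 * G2 + m22 * G1)) by nra.
    assert (0 < s * m11 * (1 - t * G2)) by (apply Rmult_lt_0_compat; nra).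
    assert (0 < t * m22 * (1 - s * G1)) by (apply Rmult_lt_0_compat; nra).
    nra.
Qed.

Section InteriorJacobianShape.

Variables bX bY bK e x y r : R.
Hypotheses (Hx : 0 < x) (Hy : 0 < y) (Hxy : x + y < 1) (Hr : r * x = y)
  (He : 0 < e) (HbK : 0 < bK) (HbKbY : bK < bY) (HbXe : bY + e <= bX).

Let G1 := bX + e * r.
Let G2 := bY + bK * x.
Let m11 := e * r * (1 - y) + bX * x.
Let m12 := x * (bX + bK + e) + 2 * e * y - e.
Let m21 := y * (bY - bK).
Let m22 := y * bY.

Let Hr0 : 0 < r.
Proof. destruct (Rle_or_lt r 0); nra. Qed.

Lemma interior_m11_bounds : 0 < m11 < G1.
Proof.
  pose proof Hr0; unfold m11, G1.
  assert (0 < e * r) by nra.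
  split; nra.
Qed.

Lemma interior_m22_bounds : 0 < m22 < G2.
Proof. unfold m22, G2; split; nra. Qed.

Lemma interior_det_pos : 0 < m11 * m22 - m12 * m21.
Proof.
  assert (Hdet : m11 * m22 - m12 * m21
    = y * (e * (1 - x - y) * (bY * (1 + r) - bK) + bK * x * (bX - bY)
           + bK * bK * x + bK * e * y)).
  { unfold m11, m12, m21, m22; rewrite <- Hr; ring. }
  pose proof Hr0; rewrite Hdet; apply Rmult_lt_0_compat; [lra |].
  assert (0 < e * (1 - x - y) * (bY * (1 + r) - bK))
    by (apply Rmult_lt_0_compat; nra).
  assert (0 <= bK * x * (bX - bY)) by (apply Rmult_le_pos; nra).
  assert (0 < bK * bK * x) by (apply Rmult_lt_0_compat; nra).
  assert (0 < bK * e * y) by (apply Rmult_lt_0_compat; nra).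
  lra.
Qed.

Lemma interior_det_lt : m11 * m22 - m12 * m21 < m11 * G2 + m22 * G1.
Proof.
  pose proof interior_m11_bounds; pose proof interior_m22_bounds; pose proof Hr0.
  assert (0 < m11 * (G2 - m22)) by (apply Rmult_lt_0_compat; lra).
  assert (Hm21 : 0 < m21) by (unfold m21; nra).
  assert (- e * m21 <= m12 * m21)
    by (apply Rmult_le_compat_r; [lra | unfold m12; nra]).
  assert (e * m21 < m22 * G1).
  { unfold m21, m22, G1.
    assert (0 < y * bY * (bX - e)) by (apply Rmult_lt_0_compat; nra).
    assert (0 < e * y * bK) by (apply Rmult_lt_0_compat; nra).
    assert (0 < y * bY * (e * r)) by (apply Rmult_lt_0_compat; nra).
    nra. }
  nra.
Qed.

Lemma interior_corner_pos : 0 < (2 * G1 - m11) * (2 * G2 - m22) - m12 * m21.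
Proof.
  pose proof interior_m11_bounds; pose proof interior_m22_bounds; pose proof Hr0.
  assert (0 < G1 * G2) by (apply Rmult_lt_0_compat; lra).
  assert (G1 * G2 < (2 * G1 - m11) * (2 * G2 - m22)) by nra.
  assert (Hm21 : 0 < m21 < bY - bK) by (unfold m21; split; nra).
  assert (m12 * m21 <= G1 * G2); [| lra].
  destruct (Rle_or_lt m12 0) as [Hm12 | Hm12]; [nra |].
  assert (m12 <= bX + bK + e * y) by (unfold m12; nra).
  assert ((bX + bK + e * y) * (bY - bK) <= bX * bY + e * y * bY).
  { assert (0 <= bK * (bX - bY)) by (apply Rmult_le_pos; lra).
    assert (0 <= e * y * bK) by (apply Rmult_le_pos; nra).
    nra. }
  assert (e * y * bY <= e * r * bY).
  { apply Rmult_le_compat_r; [lra |]. apply Rmult_le_compat_l; nra. }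
  assert (0 <= (bX + e * r) * (bK * x)) by (apply Rmult_le_pos; nra).
  unfold G1, G2 in *; nra.
Qed.

Lemma Cmod_lt_1_interior s t z :
  0 < s * G1 < 1 -> 0 < t * G2 < 1 ->
  is_eigenvalue2 (1 - s * m11) (- (s * m12)) (- (t * m21)) (1 - t * m22) z ->
  Cmod z < 1.
Proof.
  apply Cmod_lt_1_I_sub_diag_mul.
  - exact interior_m11_bounds.
  - exact interior_m22_bounds.
  - exact interior_det_pos.
  - exact interior_det_lt.
  - exact interior_corner_pos.
Qed.

End InteriorJacobianShape.

Lemma phi1_pos bY uY K beta h :
  0 < bY -> 0 < uY -> 0 < K -> 0 < beta -> 0 < h -> 0 < phi1 bY uY K beta h.
Proof.
  intros HbY HuY HK Hbeta Hh; unfold phi1.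
  assert (Hrate : 0 < beta * K * uY / bY)
    by (apply Rdiv_lt_0_compat; [apply Rmult_lt_0_compat; [nra |] |]; lra).
  assert (exp (- (beta * K * uY / bY) * h) < 1)
    by (rewrite <- exp_0; apply exp_increasing; nra).
  apply Rdiv_lt_0_compat; [| apply Rmult_lt_0_compat; [nra |]]; nra.
Qed.

Lemma ratio_bounds n m : 0 < n < m -> -1 < n / m < 1.
Proof.
  intros H; split.
  - assert (0 < n / m) by (apply Rdiv_lt_0_compat; lra); lra.
  - apply Rlt_div_l; lra.
Qed.

Lemma div_1_plus_mul_bounds q G : 0 < q -> 0 < G -> 0 < q / (1 + q * G) * G < 1.
Proof.
  intros Hq HG.
  replace (q / (1 + q * G) * G) with (q * G / (1 + q * G)) by (field; nra).
  split; [apply Rdiv_lt_0_compat |]; [nra | nra | apply ratio_bounds; nra].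
Qed.

Lemma is_derive_div_ratio (f g : R -> R) t c df dg :
  is_derive f t df -> is_derive g t dg -> g t <> 0 -> f t = c * g t ->
  is_derive (fun x => f x / g x) t ((df - c * dg) / g t).
Proof.
  intros Hf Hg Hg0 Hfg.
  replace ((df - c * dg) / g t) with ((df * g t - f t * dg) / g t ^ 2)
    by (rewrite Hfg; field; exact Hg0).
  exact (is_derive_div f g t df dg Hf Hg Hg0).
Qed.

Section Jacobian.

Variables bX bY uX uY K beta e h : R.
Hypothesis HK : K <> 0.

Let p := phi1 bY uY K beta h.

Definition lossX X Y :=
  bX / K * X + bX / K * Y + uX + beta * Y + e / K * Y + e / K * (Y ^ 2 / X).
Definition lossY X Y := bY / K * X + bY / K * Y + uY.

Lemma J11_fixed X Y :
  X <> 0 -> 1 + p * lossX X Y <> 0 ->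
  X * (1 + p * bX) + p * e * Y = X * (1 + p * lossX X Y) ->
  J11 bX bY uX uY K beta e h X Y
  = (1 + p * bX - X * (p * (bX / K - e / K * (Y ^ 2 / X ^ 2)))) / (1 + p * lossX X Y).
Proof.
  intros HX HD Hfix; unfold J11; apply is_derive_unique.
  apply (is_derive_div_ratio (fun x => x * (1 + p * bX) + p * e * Y)
           (fun x => 1 + p * lossX x Y)); [| | exact HD | exact Hfix];
    unfold lossX; auto_derive; try easy; field; auto.
Qed.

Lemma J12_fixed X Y :
  X <> 0 -> 1 + p * lossX X Y <> 0 ->
  X * (1 + p * bX) + p * e * Y = X * (1 + p * lossX X Y) ->
  J12 bX bY uX uY K beta e h X Y
  = (p * e - X * (p * (bX / K + beta + e / K + e / K * (2 * Y / X))))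
    / (1 + p * lossX X Y).
Proof.
  intros HX HD Hfix; unfold J12; apply is_derive_unique.
  apply (is_derive_div_ratio (fun y => X * (1 + p * bX) + p * e * y)
           (fun y => 1 + p * lossX X y)); [| | exact HD | exact Hfix];
    unfold lossX; auto_derive; try easy; field; auto.
Qed.

Lemma J21_fixed X Y :
  1 + h * lossY X Y <> 0 ->
  Y * (1 + h * (bY + beta * X)) = Y * (1 + h * lossY X Y) ->
  J21 bX bY uX uY K beta e h X Y
  = (Y * (h * beta) - Y * (h * (bY / K))) / (1 + h * lossY X Y).
Proof.
  intros HD Hfix; unfold J21; apply is_derive_unique.
  apply (is_derive_div_ratio (fun x => Y * (1 + h * (bY + beta * x)))
           (fun x => 1 + h * lossY x Y)); [| | exact HD | exact Hfix];
    unfold lossY; auto_derive; try easy; field; auto.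
Qed.

Lemma J22_fixed X Y :
  1 + h * lossY X Y <> 0 ->
  Y * (1 + h * (bY + beta * X)) = Y * (1 + h * lossY X Y) ->
  J22 bX bY uX uY K beta e h X Y
  = (1 + h * (bY + beta * X) - Y * (h * (bY / K))) / (1 + h * lossY X Y).
Proof.
  intros HD Hfix; unfold J22; apply is_derive_unique.
  apply (is_derive_div_ratio (fun y => y * (1 + h * (bY + beta * X)))
           (fun y => 1 + h * lossY X y)); [| | exact HD | exact Hfix];
    unfold lossY; auto_derive; try easy; field; auto.
Qed.

(* On the axis Y = 0 the term Y^2/X vanishes identically (0 / 0 = 0 in Rocq),
   so J11 exists even at X = 0. *)
Lemma J11_axis X :
  1 + p * (bX / K * X + uX) <> 0 ->
  X * (1 + p * bX) = X * (1 + p * (bX / K * X + uX)) ->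
  J11 bX bY uX uY K beta e h X 0
  = (1 + p * bX - X * (p * (bX / K))) / (1 + p * (bX / K * X + uX)).
Proof.
  intros HD Hfix; unfold J11; apply is_derive_unique.
  apply (is_derive_ext (fun x => x * (1 + p * bX) / (1 + p * (bX / K * x + uX)))).
  { intro x; unfold F1; cbv zeta; fold p.
    replace (0 ^ 2 / x) with 0 by (unfold Rdiv; ring).
    f_equal; ring. }
  apply (is_derive_div_ratio (fun x => x * (1 + p * bX))
           (fun x => 1 + p * (bX / K * x + uX))); [| | exact HD | exact Hfix];
    auto_derive; try easy; field; auto.
Qed.

Lemma J21_axis X : J21 bX bY uX uY K beta e h X 0 = 0.
Proof.
  unfold J21; rewrite (Derive_ext _ (fun _ => 0)); [apply Derive_const |].
  intro x; unfold F2, Rdiv; ring.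
Qed.

End Jacobian.

Section Equilibria.

Variables bX bY uX uY K beta e h : R.
Hypotheses (HbX : 0 < bX) (HbY : 0 < bY) (HuX : 0 < uX) (HuY : 0 < uY)
  (HK : 0 < K) (Hbeta : 0 < beta) (He : 0 < e) (Hh : 0 < h).

Let p := phi1 bY uY K beta h.

Let Hp : 0 < p.
Proof. apply phi1_pos; assumption. Qed.

Let HK0 : K <> 0.
Proof. lra. Qed.

Lemma LAS_E0 : bX < uX -> bY < uY -> LAS bX bY uX uY K beta e h 0 0.
Proof.
  intros HuXbX HuYbY z; unfold jac_eigenvalue.
  pose proof Hp.
  rewrite J21_axis, J11_axis, J22_fixed; fold p; unfold lossY;
    try assumption; try nra.
  apply Cmod_lt_1_triangular; apply ratio_bounds; nra.
Qed.

Section BoundaryEquilibrium.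

Hypothesis HuXbX : uX < bX.

Let Xb := Xbar bX uX K.

Let HXb : 0 < Xb.
Proof.
  unfold Xb, Xbar; apply Rmult_lt_0_compat; [lra |].
  assert (uX / bX < 1) by (apply Rlt_div_l; lra); lra.
Qed.

Lemma J11_E1 : J11 bX bY uX uY K beta e h Xb 0 = (1 + p * uX) / (1 + p * bX).
Proof.
  pose proof Hp.
  assert (Hrate : bX / K * Xb + uX = bX) by (unfold Xb, Xbar; field; lra).
  rewrite J11_axis; fold p; rewrite ?Hrate; [| assumption | nra | ring].
  unfold Xb, Xbar; field; nra.
Qed.

(* The sign of R0 - 1 is the sign of the parasite's net growth rate at E1. *)
Lemma E1_parasite_growth :
  1 + h * (bY + beta * Xb)
  = 1 + h * lossY bY uY K Xb 0 + h * uY * (Rnum0 bX bY uX uY K beta - 1).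
Proof. unfold Xb, lossY, Rnum0, V0, H0, Xbar; field; lra. Qed.

Let E1_lossY_pos : 0 < lossY bY uY K Xb 0.
Proof.
  unfold lossY; pose proof HXb.
  assert (0 < bY / K) by (apply Rdiv_lt_0_compat; lra); nra.
Qed.

Lemma J22_E1 :
  J22 bX bY uX uY K beta e h Xb 0
  = (1 + h * (bY + beta * Xb)) / (1 + h * lossY bY uY K Xb 0).
Proof.
  pose proof E1_lossY_pos.
  rewrite J22_fixed; [| assumption | nra | ring].
  f_equal; ring.
Qed.

Lemma LAS_E1 : Rnum0 bX bY uX uY K beta < 1 -> LAS bX bY uX uY K beta e h Xb 0.
Proof.
  intros HR z; unfold jac_eigenvalue.
  rewrite J21_axis, J11_E1, J22_E1.
  pose proof Hp; pose proof HXb; pose proof E1_parasite_growth.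
  assert (0 < h * (bY + beta * Xb)) by (apply Rmult_lt_0_compat; nra).
  assert (0 < h * uY) by nra.
  apply Cmod_lt_1_triangular; apply ratio_bounds; nra.
Qed.

Lemma unstable_E1 : Rnum0 bX bY uX uY K beta > 1 -> unstable bX bY uX uY K beta e h Xb 0.
Proof.
  intros HR; unfold unstable, jac_eigenvalue.
  rewrite J21_axis, J22_E1.
  eexists; split; [apply is_eigenvalue2_triangular_r |].
  pose proof E1_parasite_growth; pose proof E1_lossY_pos.
  assert (0 < h * uY) by nra.
  assert (1 < (1 + h * (bY + beta * Xb)) / (1 + h * lossY bY uY K Xb 0))
    by (apply Rlt_div_r; nra).
  rewrite Cmod_R, Rabs_right; lra.
Qed.

End BoundaryEquilibrium.

Lemma host_equilibrium_total_lt_K X Y :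
  0 < X -> 0 < Y -> lossX bX uX K beta e X Y = bX + e * (Y / X) -> X + Y < K.
Proof.
  intros HX HY Hloss.
  assert (Hsplit : lossX bX uX K beta e X Y
                   = (bX + e * (Y / X)) * ((X + Y) / K) + uX + beta * Y)
    by (unfold lossX; field; lra).
  assert (0 < e * (Y / X)) by (apply Rmult_lt_0_compat; [| apply Rdiv_lt_0_compat]; lra).
  assert (Hfrac : (X + Y) / K < 1); [| apply Rlt_div_l in Hfrac; lra].
  destruct (Rlt_or_le ((X + Y) / K) 1) as [| Hge]; [assumption |].
  assert (bX + e * (Y / X) <= (bX + e * (Y / X)) * ((X + Y) / K)) by nra.
  nra.
Qed.

(* The Jacobian is I - diag(s, t) M, with M written in the coordinates
   x = X/K, y = Y/K, r = Y/X of [InteriorJacobianShape]. *)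
Lemma jac_eigenvalue_interior X Y z :
  0 < X -> 0 < Y ->
  lossX bX uX K beta e X Y = bX + e * (Y / X) -> lossY bY uY K X Y = bY + beta * X ->
  jac_eigenvalue bX bY uX uY K beta e h X Y z ->
  let s := p / (1 + p * (bX + e * (Y / X))) in
  let t := h / (1 + h * (bY + beta * X)) in
  is_eigenvalue2 (1 - s * (e * (Y / X) * (1 - Y / K) + bX * (X / K)))
    (- (s * (X / K * (bX + beta * K + e) + 2 * e * (Y / K) - e)))
    (- (t * (Y / K * (bY - beta * K)))) (1 - t * (Y / K * bY)) z.
Proof.
  intros HX HY Hloss1 Hloss2 Hz s t; pose proof Hp.
  assert (0 < e * (Y / X)) by (apply Rmult_lt_0_compat; [| apply Rdiv_lt_0_compat]; lra).
  assert (HD1 : 0 < 1 + p * lossX bX uX K beta e X Y) by (rewrite Hloss1; nra).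
  assert (HD2 : 0 < 1 + h * lossY bY uY K X Y).
  { rewrite Hloss2; assert (0 < h * (bY + beta * X)) by (apply Rmult_lt_0_compat; nra).
    lra. }
  assert (Hfix1 : X * (1 + p * bX) + p * e * Y = X * (1 + p * lossX bX uX K beta e X Y))
    by (rewrite Hloss1; field; lra).
  assert (Hfix2 : Y * (1 + h * (bY + beta * X)) = Y * (1 + h * lossY bY uY K X Y))
    by (rewrite Hloss2; reflexivity).
  assert (E11 : J11 bX bY uX uY K beta e h X Y
                = 1 - s * (e * (Y / X) * (1 - Y / K) + bX * (X / K))).
  { rewrite J11_fixed; fold p; try lra. rewrite Hloss1; unfold s; field; nra. }
  assert (E12 : J12 bX bY uX uY K beta e h X Y
                = - (s * (X / K * (bX + beta * K + e) + 2 * e * (Y / K) - e))).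
  { rewrite J12_fixed; fold p; try lra. rewrite Hloss1; unfold s; field; nra. }
  assert (E21 : J21 bX bY uX uY K beta e h X Y = - (t * (Y / K * (bY - beta * K)))).
  { rewrite J21_fixed; try lra. rewrite Hloss2; unfold t; field; nra. }
  assert (E22 : J22 bX bY uX uY K beta e h X Y = 1 - t * (Y / K * bY)).
  { rewrite J22_fixed; try lra. rewrite Hloss2; unfold t; field; nra. }
  unfold jac_eigenvalue in Hz; rewrite E11, E12, E21, E22 in Hz; exact Hz.
Qed.

Section InteriorEquilibrium.

Hypotheses (HbK : beta * K < bY) (HbXe : bX >= bY + e).

Lemma LAS_interior X Y :
  0 < X -> 0 < Y ->
  lossX bX uX K beta e X Y = bX + e * (Y / X) -> lossY bY uY K X Y = bY + beta * X ->
  LAS bX bY uX uY K beta e h X Y.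
Proof.
  intros HX HY Hloss1 Hloss2 z Hz.
  pose proof (host_equilibrium_total_lt_K X Y HX HY Hloss1).
  pose proof Hp.
  assert (0 < e * (Y / X)) by (apply Rmult_lt_0_compat; [| apply Rdiv_lt_0_compat]; lra).
  apply (jac_eigenvalue_interior X Y z HX HY Hloss1 Hloss2) in Hz; cbv zeta in Hz.
  revert Hz; apply (Cmod_lt_1_interior bX bY (beta * K) e (X / K) (Y / K) (Y / X)).
  - apply Rdiv_lt_0_compat; lra.
  - apply Rdiv_lt_0_compat; lra.
  - replace (X / K + Y / K) with ((X + Y) / K) by (field; lra).
    apply Rlt_div_l; lra.
  - field; lra.
  - assumption.
  - nra.
  - assumption.
  - lra.
  - apply div_1_plus_mul_bounds; lra.
  - replace (beta * K * (X / K)) with (beta * X) by (field; lra).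
    apply div_1_plus_mul_bounds; nra.
Qed.

(* The quadratic defining X* is the host fixed-point equation along the
   parasite nullcline Y = Y*(X). *)
Lemma host_equilibrium_quadratic X :
  X <> 0 ->
  let Y := (beta * K - bY) * X / bY + K * (bY - uY) / bY in
  K * X * (lossX bX uX K beta e X Y - (bX + e * (Y / X)))
  = coefA bX bY e K beta * X ^ 2 + coefB bX bY uX uY e K beta * X + coefC bY uY e K.
Proof. intros HX Y; unfold Y, lossX, coefA, coefB, coefC; field; lra. Qed.

Section PositiveEquilibrium.

Hypotheses (HuYbY : bY > uY)
  (HKX : K / Xstar bX bY uX uY e K beta > (bY - beta * K) / (bY - uY)).

Let Xs := Xstar bX bY uX uY e K beta.
Let Ys := Ystar bX bY uX uY e K beta.

Lemma coefA_pos : 0 < coefA bX bY e K beta.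
Proof.
  unfold coefA; apply Rmult_lt_0_compat; [apply Rdiv_lt_0_compat; nra |].
  assert (0 <= bY * (bX - bY - e)) by (apply Rmult_le_pos; lra).
  assert (0 < beta * K * (bY + e)) by (apply Rmult_lt_0_compat; nra).
  lra.
Qed.

Lemma coefC_neg : coefC bY uY e K < 0.
Proof.
  unfold coefC.
  assert (0 < e * K ^ 2 * (bY - uY) * uY / bY ^ 2); [| lra].
  apply Rdiv_lt_0_compat; [| nra].
  repeat apply Rmult_lt_0_compat; nra.
Qed.

Lemma Xstar_root :
  coefA bX bY e K beta * Xs ^ 2 + coefB bX bY uX uY e K beta * Xs + coefC bY uY e K = 0.
Proof.
  pose proof coefA_pos as HA; pose proof coefC_neg.
  rewrite <- Rsqr_pow2.
  apply (Rsqr_sol_eq_0_1 (mknonzeroreal _ (Rgt_not_eq _ _ HA))).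
  - unfold Delta_is_pos, Delta; simpl; rewrite Rsqr_pow2; nra.
  - left; unfold Xs, Xstar, sol_x1, Delta; simpl; rewrite Rsqr_pow2; reflexivity.
Qed.

Lemma Xstar_pos : 0 < Xs.
Proof.
  assert (0 < (bY - beta * K) / (bY - uY)) by (apply Rdiv_lt_0_compat; lra).
  destruct (Rlt_or_le 0 Xs) as [| HXs]; [assumption | exfalso].
  destruct (Req_dec Xs 0) as [HX0 | HX0].
  - fold Xs in HKX; rewrite HX0, Rdiv_0_r in HKX; lra.
  - assert (K / Xs < 0) by (apply Rdiv_pos_neg; lra).
    fold Xs in HKX; lra.
Qed.

Lemma Ystar_pos : 0 < Ys.
Proof.
  pose proof Xstar_pos.
  assert ((bY - beta * K) * Xs < K * (bY - uY)).
  { fold Xs in HKX.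
    assert (0 < Xs * (bY - uY)) by nra.
    replace (K * (bY - uY)) with (K / Xs * (Xs * (bY - uY))) by (field; lra).
    replace ((bY - beta * K) * Xs)
      with ((bY - beta * K) / (bY - uY) * (Xs * (bY - uY))) by (field; lra).
    apply Rmult_lt_compat_r; lra. }
  replace Ys with ((K * (bY - uY) - (bY - beta * K) * Xs) / bY)
    by (unfold Ys, Ystar; fold Xs; field; lra).
  apply Rdiv_lt_0_compat; lra.
Qed.

Lemma Estar_parasite_fixed : lossY bY uY K Xs Ys = bY + beta * Xs.
Proof. unfold lossY, Ys, Ystar; fold Xs; field; lra. Qed.

Lemma Estar_host_fixed : lossX bX uX K beta e Xs Ys = bX + e * (Ys / Xs).
Proof.
  pose proof Xstar_pos as HXs.
  assert (Hquad := host_equilibrium_quadratic Xs (Rgt_not_eq _ _ HXs)).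
  cbv zeta in Hquad; rewrite Xstar_root in Hquad.
  unfold Ys, Ystar; fold Xs.
  apply Rmult_integral in Hquad; destruct Hquad as [Hquad | Hquad]; [nra | lra].
Qed.

Lemma LAS_Estar : LAS bX bY uX uY K beta e h Xs Ys.
Proof.
  apply LAS_interior.
  - exact Xstar_pos.
  - exact Ystar_pos.
  - exact Estar_host_fixed.
  - exact Estar_parasite_fixed.
Qed.

End PositiveEquilibrium.

End InteriorEquilibrium.

End Equilibria.

Theorem theorem4 (bX bY uX uY K beta e h : R) :
  0 < bX -> 0 < bY -> 0 < uX -> 0 < uY -> 0 < K -> 0 < beta -> 0 < e ->
  uY > uX -> bX >= bY + e -> 0 < h ->
  (* (i) *)
  ((bX < uX -> bY < uY -> LAS bX bY uX uY K beta e h 0 0) /\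
  (* (ii) *)
   (bX > uX ->
      (Rnum0 bX bY uX uY K beta < 1 -> LAS bX bY uX uY K beta e h (Xbar bX uX K) 0) /\
      (Rnum0 bX bY uX uY K beta > 1 -> unstable bX bY uX uY K beta e h (Xbar bX uX K) 0)) /\
  (* (iii) *)
   (bX > uX -> bY > uY -> bY > beta * K ->
      K / Xstar bX bY uX uY e K beta > (bY - beta * K) / (bY - uY) ->
      LAS bX bY uX uY K beta e h (Xstar bX bY uX uY e K beta) (Ystar bX bY uX uY e K beta))).
Proof.
  intros HbX HbY HuX HuY HK Hbeta He _ HbXe Hh.
  split; [| split].
  - intros HbXuX HbYuY; apply LAS_E0; assumption.
  - intros HuXbX; split; intros HR.
    + apply LAS_E1; assumption.
    + apply unstable_E1; assumption.
  - intros _ HuYbY HbK HKX; apply LAS_Estar; assumption.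
Qed.
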